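(* Let $V$ be a real vector space of finite even dimension with nondegenerate quadratic form $Q$, and let $\rho$ be a nonzero $c$-compatible representation of $\mathbb{C}l(V)$ on a finite-dimensional complex vector space $K$ with nondegenerate hermitian form $(\cdot,\cdot)$. Let $\sigma=\mathrm{Ad}_b\circ c$ be an admissible real structure with $b$ in the complex Clifford group. For $x\in\mathbb{C}l(V)$ let $(\cdot,\cdot)_x=(\cdot,\rho(x)\cdot)$. Then $(\cdot,\cdot)_x$ is a $\sigma$-compatible Krein product on $K$ iff $x=x^\times$ and $x$ is proportional to $b^{-1}$.
   Context: $Cl(V,Q)$ is the real Clifford algebra with $v^2=+Q(v)$, $\mathbb{C}l(V)$ its complexification with complex conjugation $c$; $T$ the linear antiautomorphism restricting to the identity on $V$; $a^\times=c(T(a))$; for a real structure $\sigma$, $a^{\times_\sigma}=\sigma(T(a))$. A real structure is an involutive antilinear algebra automorphism stabilizing $V^{\mathbb{C}}$; admissible means commuting with $c$; $\mathrm{Ad}_b(a)=bab^{-1}$; the complex Clifford group consists of invertible $g$ with $gV^{\mathbb{C}}g^{-1}\subset V^{\mathbb{C}}$. $\rho$ is $c$-compatible if $(\rho(a)\psi,\phi)=(\psi,\rho(a^\times)\phi)$ for all $a,\psi,\phi$. A Krein product is a nondegenerate hermitian form $(\cdot,\cdot)'$; it is $\sigma$-compatible if $(\rho(a)\psi,\phi)'=(\psi,\rho(a^{\times_\sigma})\phi)'$ for all $a,\psi,\phi$. ''Proportional'' means a nonzero complex multiple. *)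

(* Concrete model of the complexified Clifford algebra
   of R^{p,q} (orthonormal basis e_i with e_i^2 = Q(e_i) = +-1). *)
From HB Require Import structures.
From mathcomp Require Import all_boot all_order all_algebra.
Set Implicit Arguments. Unset Strict Implicit. Unset Printing Implicit Defensive.
Import Order.TTheory GRing.Theory Num.Theory.
Local Open Scope ring_scope.

Section Clifford.
Variables (C : numClosedFieldType) (n : nat).
(* s i = true iff Q(e_i) = +1, s i = false iff Q(e_i) = -1 *)
Variable s : 'I_n -> bool.

(* elements of Cl(V)^C: coefficients on the basis e_A, A subset of {0..n-1},
   e_A = e_{a1} ... e_{ak} with a1 < ... < ak *)
Definition cl := {ffun {set 'I_n} -> C}.

Definition cl_basis (A : {set 'I_n}) : cl := [ffun B => (B == A)%:R].
Definition cl_one : cl := cl_basis set0.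
Definition cl_add (x y : cl) : cl := [ffun A => x A + y A].
Definition cl_scale (l : C) (x : cl) : cl := [ffun A => l * x A].

Definition symd (A B : {set 'I_n}) := (A :\: B) :|: (B :\: A).

(* e_A e_B = cl_sign A B e_{A symd B} *)
Definition cl_sign (A B : {set 'I_n}) : C :=
  (-1) ^+ #|[set p : 'I_n * 'I_n | (p.1 \in A) && (p.2 \in B) && (p.2 < p.1)%N]|
  * \prod_(i in A :&: B) (if s i then 1 else -1).

Definition cl_mul (x y : cl) : cl :=
  [ffun D => \sum_(A : {set 'I_n}) \sum_(B : {set 'I_n} | symd A B == D)
               x A * y B * cl_sign A B].

(* membership in V^C = span of the e_i *)
Definition in_VC (x : cl) : Prop := forall A : {set 'I_n}, #|A| != 1%N -> x A = 0.

(* complex conjugation c (the basis e_A is real) *)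
Definition cl_conj (x : cl) : cl := [ffun A : {set 'I_n} => (x A)^*].
(* T : the linear antiautomorphism that is the identity on V
   (e_{a1}...e_{ak} |-> e_{ak}...e_{a1} = (-1)^(k(k-1)/2) e_A) *)
Definition cl_T (x : cl) : cl := [ffun A : {set 'I_n} => (-1) ^+ 'C(#|A|, 2) * x A].
Definition cl_times (x : cl) : cl := cl_conj (cl_T x).

Definition clifford_group (b binv : cl) : Prop :=
  cl_mul b binv = cl_one /\ cl_mul binv b = cl_one /\
  forall v, in_VC v -> in_VC (cl_mul (cl_mul b v) binv).

Definition Ad_c (b binv : cl) (a : cl) : cl := cl_mul (cl_mul b (cl_conj a)) binv.

Definition real_structure (sg : cl -> cl) : Prop :=
  (forall x y, sg (cl_add x y) = cl_add (sg x) (sg y)) /\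
  (forall l x, sg (cl_scale l x) = cl_scale (l^*) (sg x)) /\
  (forall x y, sg (cl_mul x y) = cl_mul (sg x) (sg y)) /\
  sg cl_one = cl_one /\
  (forall x, sg (sg x) = x) /\
  (forall x, in_VC x -> in_VC (sg x)).

Definition admissible (sg : cl -> cl) : Prop :=
  forall x, sg (cl_conj x) = cl_conj (sg x).

Definition cl_times_sigma (sg : cl -> cl) (x : cl) : cl := sg (cl_T x).

Variable m : nat.

Definition is_rep (rho : cl -> 'M[C]_m) : Prop :=
  (forall x y, rho (cl_add x y) = rho x + rho y) /\
  (forall l x, rho (cl_scale l x) = l *: rho x) /\
  (forall x y, rho (cl_mul x y) = rho x *m rho y) /\
  rho cl_one = 1%:M.

(* hermitian forms, linear in the second argument *)
Definition herm_form (f : 'cV[C]_m -> 'cV[C]_m -> C) : Prop :=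
  (forall psi phi1 phi2, f psi (phi1 + phi2) = f psi phi1 + f psi phi2) /\
  (forall psi l phi, f psi (l *: phi) = l * f psi phi) /\
  (forall psi phi, f psi phi = (f phi psi)^*).

Definition nondeg_form (f : 'cV[C]_m -> 'cV[C]_m -> C) : Prop :=
  forall psi, (forall phi, f psi phi = 0) -> psi = 0.

Definition krein_product (f : 'cV[C]_m -> 'cV[C]_m -> C) : Prop :=
  herm_form f /\ nondeg_form f.

Definition c_compatible (rho : cl -> 'M[C]_m) (f : 'cV[C]_m -> 'cV[C]_m -> C) : Prop :=
  forall a psi phi, f (rho a *m psi) phi = f psi (rho (cl_times a) *m phi).

Definition sigma_compatible (sg : cl -> cl) (rho : cl -> 'M[C]_m)
  (f : 'cV[C]_m -> 'cV[C]_m -> C) : Prop :=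
  forall a psi phi, f (rho a *m psi) phi = f psi (rho (cl_times_sigma sg a) *m phi).

Definition form_at (rho : cl -> 'M[C]_m) (f : 'cV[C]_m -> 'cV[C]_m -> C) (x : cl) :=
  fun psi phi => f psi (rho x *m phi).

End Clifford.

From HB Require Import structures.
From mathcomp Require Import all_boot all_order all_algebra.
From mathcomp Require Import ring.
Set Implicit Arguments. Unset Strict Implicit. Unset Printing Implicit Defensive.
Import Order.TTheory GRing.Theory Num.Theory.
Local Open Scope ring_scope.

(** For n even, averaging z |-> sum_A e_A^-1 z e_A over the basis of Cl(V)^C
   gives 2^n z_0, where z_0 is the scalar part of z: the coefficient of e_D is
   multiplied by sum_A (-1)^(|A||D| + |A :&: D|), and when D is nonempty,
   toggling a suitable index i in A reverses the sign of each term. Inside a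
   representation rho this forces every element commuting with rho(Cl(V)^C) to
   be the scalar z_0, and forces a nonzero rho to be faithful. By
   c-compatibility, (.,.)_x is hermitian iff rho(x^x) = rho(x), and it is
   (Ad_b o c)-compatible iff rho(x b) commutes with rho(Cl(V)^C), i.e. iff x b
   is a scalar l; l is nonzero because (.,.)_x is nondegenerate. *)

Lemma odd_card_symdiff (T : finType) (A B : {set T}) :
  odd #|(A :\: B) :|: (B :\: A)| = odd #|A| (+) odd #|B|.
Proof.
have disjointDD : (A :\: B) :&: (B :\: A) = set0.
  by apply/setP => x; rewrite !inE; case: (x \in A); case: (x \in B).
have := cardsUI (A :\: B) (B :\: A); rewrite disjointDD cards0 addn0 => ->.
rewrite -(cardsID B A) -(cardsID A B) setIC !oddD.
by rewrite addbACA addbb.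
Qed.

Lemma sumr_involution_opp_eq0 (R : numDomainType) (T : finType) (t : T -> T) (F : T -> R) :
  involutive t -> (forall x, F (t x) = - F x) -> \sum_x F x = 0.
Proof.
move=> tK Ft; apply/eqP; rewrite -[_ == 0](mulrn_eq0 _ 2) mulr2n addr_eq0.
rewrite [X in X == _](reindex_inj (inv_inj tK)) -sumrN.
by apply/eqP/eq_bigr => x _; rewrite Ft.
Qed.

Section SignSum.
Variables (R : numDomainType) (n : nat).
Hypothesis n_even : ~~ odd n.

Lemma exists_odd_card_add_mem (D : {set 'I_n}) : D != set0 -> exists i, odd (#|D| + (i \in D)).
Proof.
move=> D0; have [oD | eD] := boolP (odd #|D|).
  have [i iD | D_full] := pickP (fun i => i \notin D).
    by exists i; rewrite (negbTE iD) addn0.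
  have DT : D = setT by apply/setP => i; rewrite inE; apply/negbFE/D_full.
  by move: oD n_even; rewrite DT cardsT card_ord => ->.
have [i iD] := set0Pn _ D0.
by exists i; rewrite iD addn1 /= eD.
Qed.

Lemma sum_signr_card_setI (D : {set 'I_n}) :
  \sum_(S : {set 'I_n}) (-1) ^+ (#|S| * #|D| + #|S :&: D|)
    = if D == set0 then #|{set 'I_n}|%:R else 0 :> R.
Proof.
have [-> | D0] := eqVneq D set0.
  by rewrite -sumr_const; apply: eq_bigr => S _; rewrite setI0 cards0 muln0.
have [i odd_i] := exists_odd_card_add_mem D0.
pose flip S := (S :\: [set i]) :|: ([set i] :\: S).
apply: (@sumr_involution_opp_eq0 _ _ flip).
  by move=> S; apply/setP => j; rewrite !inE; case: (j == i); case: (j \in S).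
move=> S; rewrite -[RHS]mulN1r -exprS -signr_odd -[in RHS]signr_odd.
congr (_ ^+ nat_of_bool _).
have -> : flip S :&: D = ((S :&: D) :\: ([set i] :&: D)) :|: (([set i] :&: D) :\: (S :&: D)).
  by apply/setP => j; rewrite !inE; case: (j == i); case: (j \in S); case: (j \in D).
rewrite !(oddS, oddD, oddM, odd_card_symdiff, oddb) cards1.
have -> : #|[set i] :&: D| = (i \in D).
  have [iD | iD] := boolP (i \in D); first by rewrite (setIidPl _) ?cards1 ?sub1set.
  by apply/eqP; rewrite cards_eq0 setI_eq0 disjoints1.
move: odd_i; rewrite oddD oddb.
by case: (odd #|D|); case: (i \in D); case: (odd #|S|); case: (odd #|S :&: D|).
Qed.

End SignSum.

Section CliffordBasis.
Variables (C : numClosedFieldType) (n : nat) (s : 'I_n -> bool).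
Local Notation sign := (cl_sign C s).

Lemma in_symd (A B : {set 'I_n}) i : (i \in symd A B) = (i \in A) (+) (i \in B).
Proof. by rewrite !inE; case: (i \in A); case: (i \in B). Qed.

Lemma symdC (A B : {set 'I_n}) : symd A B = symd B A.
Proof. by apply/setP => i; rewrite !in_symd addbC. Qed.

Lemma symdKl (A B : {set 'I_n}) : symd A (symd A B) = B.
Proof. by apply/setP => i; rewrite !in_symd addKb. Qed.

Lemma symdd (A : {set 'I_n}) : symd A A = set0.
Proof. by apply/setP => i; rewrite in_symd inE addbb. Qed.

Lemma symd0 (A : {set 'I_n}) : symd A set0 = A.
Proof. by apply/setP => i; rewrite in_symd inE addbF. Qed.

Definition inversions (A B : {set 'I_n}) :=
  [set p : 'I_n * 'I_n | (p.1 \in A) && (p.2 \in B) && (p.2 < p.1)%N].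

Definition qsign (A : {set 'I_n}) : C := \prod_(i in A) (if s i then 1 else -1).

Lemma cl_signE A B : sign A B = (-1) ^+ #|inversions A B| * qsign (A :&: B).
Proof. by []. Qed.

Lemma qsign_sqr A : qsign A ^+ 2 = 1.
Proof. by rewrite -prodrXl; apply: big1 => i _; case: (s i); rewrite ?sqrrN expr1n. Qed.

Lemma cl_sign_sqr A B : sign A B ^+ 2 = 1.
Proof. by rewrite cl_signE exprMn sqrr_sign qsign_sqr mulr1. Qed.

Lemma odd_card_inversions_symdl A B D :
  odd #|inversions (symd A B) D| = odd #|inversions A D| (+) odd #|inversions B D|.
Proof.
rewrite -odd_card_symdiff; congr (odd #|pred_of_set _|); apply/setP => p; rewrite !inE.
by case: (p.1 \in A); case: (p.1 \in B); case: (p.2 \in D); case: (p.2 < p.1)%N.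
Qed.

Lemma card_inversions A B :
  (#|inversions A B| + #|inversions B A| + #|A :&: B| = #|A| * #|B|)%N.
Proof.
have cardE (P : pred ('I_n * 'I_n)) : #|[set p | P p]| = (\sum_p P p)%N.
  by rewrite -sum1_card big_mkcond; apply: eq_bigr => p _; rewrite inE; case: (P p).
have diagE : #|A :&: B| = (\sum_p ((p.1 \in A) && (p.2 \in B) && (p.1 == p.2)))%N.
  rewrite -(pair_bigA _ (fun a b => ((a \in A) && (b \in B) && (a == b) : nat))).
  rewrite -sum1_card big_mkcond /=; apply: eq_bigr => a _.
  rewrite (bigD1 a) //= eqxx andbT big1 ?addn0 => [|b /negbTE ba]; first by rewrite inE.
  by rewrite eq_sym ba andbF.
pose swap (p : 'I_n * 'I_n) := (p.2, p.1).
have swapK : involutive swap by case.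
rewrite -cardsX !cardE diagE [X in (_ + X + _)%N](reindex_inj (inv_inj swapK)).
rewrite -!big_split /=.
apply: eq_bigr => -[a b] _ /=.
rewrite -val_eqE /=; case: ltngtP => _; by case: (a \in A); case: (b \in B).
Qed.

Lemma cl_sign_conj A D :
  sign A A * sign A D * sign (symd A D) A = (-1) ^+ (#|A| * #|D| + #|A :&: D|).
Proof.
rewrite !cl_signE setIid.
have signAD : (-1) ^+ #|inversions (symd A D) A|
              = (-1) ^+ #|inversions A A| * (-1) ^+ #|inversions D A| :> C.
  by rewrite -signr_odd odd_card_inversions_symdl signr_addb !signr_odd.
have -> : (-1) ^+ (#|A| * #|D| + #|A :&: D|)
          = (-1) ^+ #|inversions A D| * (-1) ^+ #|inversions D A| :> C.
  by rewrite -card_inversions -addnA addnn -muln2 !exprD exprM sqrr_sign mulr1.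
have -> : symd A D :&: A = A :\: D.
  by apply/setP => i; rewrite !inE; case: (i \in A); case: (i \in D).
have -> : qsign A = qsign (A :&: D) * qsign (A :\: D) by rewrite /qsign (big_setID D).
rewrite signAD; set a := (-1) ^+ _; set q1 := qsign _; set q2 := qsign _.
transitivity (a ^+ 2 * q1 ^+ 2 * q2 ^+ 2
                * ((-1) ^+ #|inversions A D| * (-1) ^+ #|inversions D A|)); first by ring.
by rewrite sqrr_sign !qsign_sqr !mul1r.
Qed.

Lemma symd_eqr (A B D : {set 'I_n}) : (symd A B == D) = (B == symd A D).
Proof. by apply/eqP/eqP => [<- | ->]; rewrite symdKl. Qed.

Local Notation e := (cl_basis C).

Lemma sum_basis A (P : pred {set 'I_n}) (F : {set 'I_n} -> C) :
  \sum_(B | P B) e A B * F B = if P A then F A else 0.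
Proof.
rewrite big_mkcond (bigD1 A) //= ffunE eqxx mul1r big1 ?addr0 // => B /negbTE BA.
by rewrite ffunE BA mul0r if_same.
Qed.

Lemma mul_basis_l A z D : cl_mul s (e A) z D = z (symd A D) * sign A (symd A D).
Proof.
rewrite ffunE (eq_bigr (fun A' => e A A' * \sum_(B | symd A' B == D) z B * sign A' B)).
  rewrite (sum_basis _ xpredT) /= (eq_bigl (pred1 (symd A D))) ?big_pred1_eq //.
  by move=> B; rewrite /= symd_eqr.
by move=> A' _; rewrite mulr_sumr; apply: eq_bigr => B _; rewrite mulrA.
Qed.

Lemma mul_basis_r z A D : cl_mul s z (e A) D = z (symd D A) * sign (symd D A) A.
Proof.
rewrite ffunE (eq_bigr (fun A' => if symd A' A == D then z A' * sign A' A else 0)).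
  rewrite -big_mkcond (eq_bigl (pred1 (symd D A))) ?big_pred1_eq //.
  by move=> A'; rewrite /= symdC symd_eqr symdC.
move=> A' _; rewrite -(sum_basis A (fun B => symd A' B == D) (fun B => z A' * sign A' B)).
by apply: eq_bigr => B _; ring.
Qed.

Lemma mul_basis A B : cl_mul s (e A) (e B) = cl_scale (sign A B) (e (symd A B)).
Proof.
apply/ffunP => D; rewrite mul_basis_l !ffunE mulrC.
by rewrite symd_eqr; case: eqP => [-> | _]; rewrite ?symdKl ?mulr0.
Qed.

Lemma coef_conj_basis A z D :
  sign A A * cl_mul s (cl_mul s (e A) z) (e A) D = z D * (-1) ^+ (#|A| * #|D| + #|A :&: D|).
Proof. by rewrite mul_basis_r mul_basis_l [symd D A]symdC symdKl -cl_sign_conj; ring. Qed.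

(* sum_A e_A^-1 z e_A, since e_A^-1 = sign A A * e_A *)
Definition basis_average (z : cl C n) : cl C n :=
  \sum_(A : {set 'I_n}) cl_scale (sign A A) (cl_mul s (cl_mul s (e A) z) (e A)).

Lemma basis_average_even z : ~~ odd n ->
  basis_average z = cl_scale (#|{set 'I_n}|%:R * z set0) (cl_one C n).
Proof.
move=> n_even; apply/ffunP => D; rewrite sum_ffunE !ffunE.
under eq_bigr do rewrite ffunE coef_conj_basis.
rewrite -mulr_sumr sum_signr_card_setI //.
by have [-> | _] := eqVneq D set0; rewrite ?mulr0 ?mulr1 // mulrC.
Qed.

End CliffordBasis.

Lemma cl_timesK (C : numClosedFieldType) (n : nat) : involutive (@cl_times C n).
Proof.
move=> x; apply/ffunP => A; rewrite /cl_times /cl_conj /cl_T !ffunE.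
by apply: (canLR conjCK); rewrite rmorphM rmorph_sign mulrA -expr2 sqrr_sign mul1r.
Qed.

Section Representation.
Variables (C : numClosedFieldType) (n : nat) (s : 'I_n -> bool) (m : nat).
Variable rho : cl C n -> 'M[C]_m.
Hypothesis rho_rep : is_rep s rho.
Hypothesis n_even : ~~ odd n.
Local Notation e := (cl_basis C).
Local Notation sign := (cl_sign C s).

Lemma rhoD x y : rho (x + y) = rho x + rho y.
Proof. by case: rho_rep => + _; apply. Qed.

Lemma rhoZ l x : rho (cl_scale l x) = l *: rho x.
Proof. by case: rho_rep => _ [+ _]; apply. Qed.

Lemma rhoM x y : rho (cl_mul s x y) = rho x *m rho y.
Proof. by case: rho_rep => _ [_ [+ _]]; apply. Qed.

Lemma rho1 : rho (cl_one C n) = 1%:M.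
Proof. by case: rho_rep => _ [_ []]. Qed.

Lemma rho0 : rho 0 = 0.
Proof.
have -> : 0 = cl_scale 0 (0 : cl C n) by apply/ffunP => A; rewrite !ffunE mul0r.
by rewrite rhoZ scale0r.
Qed.

Lemma rhoN x : rho (- x) = - rho x.
Proof.
have -> : - x = cl_scale (-1) x by apply/ffunP => A; rewrite !ffunE mulN1r.
by rewrite rhoZ scaleN1r.
Qed.

Lemma rho_sum (I : finType) (F : I -> cl C n) : rho (\sum_i F i) = \sum_i rho (F i).
Proof. exact: (big_morph rho rhoD rho0). Qed.

Lemma rho_basis_sqr A : rho (e A) *m rho (e A) = sign A A *: 1%:M.
Proof. by rewrite -rhoM mul_basis symdd rhoZ rho1. Qed.

Lemma rho_central z : (forall y, rho y *m rho z = rho z *m rho y) -> rho z = z set0 *: 1%:M.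
Proof.
move=> z_central; set N : C := #|{set 'I_n}|%:R.
have N_neq0 : N != 0 by rewrite pnatr_eq0 -lt0n; apply/card_gt0P; exists set0.
have : rho (basis_average s z) = N *: rho z.
  rewrite /N scaler_nat -sumr_const rho_sum; apply: eq_bigr => A _.
  rewrite rhoZ !rhoM -mulmxA -z_central mulmxA rho_basis_sqr -scalemxAl mul1mx.
  by rewrite scalerA -expr2 cl_sign_sqr scale1r.
by rewrite basis_average_even // rhoZ rho1 -scalerA => /(scalerI N_neq0) ->.
Qed.

Lemma rho_eq0 z : (0 < m)%N -> rho z = 0 -> z = 0.
Proof.
move=> m_gt0 rho_z0; have one_neq0 : (1%:M : 'M[C]_m) != 0.
  apply/eqP => /matrixP/(_ (Ordinal m_gt0) (Ordinal m_gt0)) /eqP.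
  by rewrite !mxE eqxx oner_eq0.
apply/ffunP => A; rewrite ffunE.
have : rho (cl_mul s (e A) z) = cl_mul s (e A) z set0 *: 1%:M.
  by apply: rho_central => y; rewrite !rhoM rho_z0 !(mulmx0, mul0mx).
rewrite rhoM rho_z0 mulmx0 mul_basis_l symd0 => /esym/eqP.
rewrite scaler_eq0 (negbTE one_neq0) orbF mulf_eq0 => /orP[/eqP // | /eqP signAA0].
by have := cl_sign_sqr C s A A; rewrite signAA0 expr0n /= => /eqP; rewrite eq_sym oner_eq0.
Qed.

Lemma rho_inj : (0 < m)%N -> injective rho.
Proof.
move=> m_gt0 u v rho_uv; apply/eqP; rewrite -subr_eq0; apply/eqP/rho_eq0 => //.
by rewrite rhoD rhoN rho_uv subrr.
Qed.

Lemma Ad_c_compatible b binv X :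
  cl_mul s b binv = cl_one C n -> cl_mul s binv b = cl_one C n ->
  (forall a, rho (cl_times a) *m X = X *m rho (cl_times_sigma (Ad_c s b binv) a))
  <-> (forall y, rho y *m (X *m rho b) = (X *m rho b) *m rho y).
Proof.
move=> b_binv binv_b.
have rho_b_binv : rho b *m rho binv = 1%:M by rewrite -rhoM b_binv rho1.
have rho_binv_b : rho binv *m rho b = 1%:M by rewrite -rhoM binv_b rho1.
have rho_Ad a : rho (cl_times_sigma (Ad_c s b binv) a) = rho b *m rho (cl_times a) *m rho binv.
  by rewrite !rhoM.
split=> [X_Ad y | Xb_central a]; rewrite ?rho_Ad !mulmxA.
  rewrite -{1}[y]cl_timesK X_Ad rho_Ad cl_timesK !mulmxA.
  by rewrite -(mulmxA _ (rho binv)) rho_binv_b mulmx1.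
by rewrite -Xb_central !mulmxA -(mulmxA _ (rho b)) rho_b_binv mulmx1.
Qed.

End Representation.

Section Forms.
Variables (C : numClosedFieldType) (n m : nat).
Variables (rho : cl C n -> 'M[C]_m) (f : 'cV[C]_m -> 'cV[C]_m -> C).
Hypotheses (f_herm : herm_form f) (f_nondeg : nondeg_form f) (rho_c : c_compatible rho f).

Lemma herm_formD psi phi1 phi2 : f psi (phi1 + phi2) = f psi phi1 + f psi phi2.
Proof. by case: f_herm. Qed.

Lemma herm_formZ psi l phi : f psi (l *: phi) = l * f psi phi.
Proof. by case: f_herm => _ []. Qed.

Lemma herm_formC psi phi : f psi phi = (f phi psi)^*.
Proof. by case: f_herm => _ []. Qed.

Lemma herm_formB psi phi1 phi2 : f psi (phi1 - phi2) = f psi phi1 - f psi phi2.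
Proof. by rewrite herm_formD -scaleN1r herm_formZ mulN1r. Qed.

Lemma form_mx_inj (A B : 'M[C]_m) :
  (forall psi phi, f psi (A *m phi) = f psi (B *m phi)) -> A = B.
Proof.
move=> fAB; apply: trmx_inj; apply/eqP/mulmxP => u; rewrite -[u]trmxK -!trmx_mul.
congr (_^T); apply/eqP; rewrite -subr_eq0; apply/eqP/f_nondeg => psi.
by rewrite herm_formC herm_formB fAB subrr conjC0.
Qed.

Lemma form_at_herm x : herm_form (form_at rho f x) <-> rho (cl_times x) = rho x.
Proof.
split=> [[_ [_ fx_sym]] | rho_x].
  by apply: form_mx_inj => psi phi; rewrite -rho_c herm_formC; symmetry; apply: fx_sym.
split; [|split] => psi *; rewrite /form_at.
- by rewrite mulmxDr herm_formD.
- by rewrite -scalemxAr herm_formZ.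
- by rewrite -herm_formC rho_c rho_x.
Qed.

Lemma form_at_nondeg x B : rho x *m B = 1%:M -> nondeg_form (form_at rho f x).
Proof.
move=> rho_xB psi f_psi0; apply: f_nondeg => phi.
by rewrite -[phi]mul1mx -rho_xB -mulmxA; apply: f_psi0.
Qed.

Lemma form_at_nondeg_neq0 x : (0 < m)%N -> nondeg_form (form_at rho f x) -> rho x != 0.
Proof.
move=> m_gt0 fx_nondeg; apply/eqP => rho_x0.
have /matrixP/(_ (Ordinal m_gt0) 0)/eqP : delta_mx (Ordinal m_gt0) 0 = 0 :> 'cV[C]_m.
  apply: fx_nondeg => phi; rewrite /form_at rho_x0 mul0mx.
  by rewrite -(scale0r 0) herm_formZ mul0r.
by rewrite !mxE !eqxx oner_eq0.
Qed.

Lemma form_at_sigma_compatible sg x :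
  sigma_compatible sg rho (form_at rho f x)
  <-> forall a, rho (cl_times a) *m rho x = rho x *m rho (cl_times_sigma sg a).
Proof.
split=> [fx_sg a | rho_x_sg a psi phi].
  by apply: form_mx_inj => psi phi; rewrite -!mulmxA -rho_c; apply: fx_sg.
by rewrite /form_at rho_c !mulmxA rho_x_sg.
Qed.

End Forms.

Theorem lemma5 (C : numClosedFieldType) (n : nat) (s : 'I_n -> bool) (m : nat)
  (rho : cl C n -> 'M[C]_m) (f : 'cV[C]_m -> 'cV[C]_m -> C) (b binv : cl C n) :
  ~~ odd n ->
  is_rep s rho -> (exists a, rho a != 0) ->
  herm_form f -> nondeg_form f ->
  c_compatible rho f ->
  clifford_group s b binv ->
  real_structure s (Ad_c s b binv) -> admissible (Ad_c s b binv) ->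
  forall x : cl C n,
    (krein_product (form_at rho f x) /\
     sigma_compatible (Ad_c s b binv) rho (form_at rho f x))
    <->
    (x = cl_times x /\ exists l : C, l != 0 /\ x = cl_scale l binv).
Proof.
move=> n_even rho_rep [a rho_a] f_herm f_nondeg rho_c [b_binv [binv_b _]] _ _ x.
have m_gt0 : (0 < m)%N.
  rewrite lt0n; apply: contraNneq rho_a => m0.
  by apply/eqP/matrixP => i; have := ltn_ord i; rewrite {2}m0.
have rho_b_binv : rho b *m rho binv = 1%:M by rewrite -(rhoM rho_rep) b_binv (rho1 rho_rep).
have rho_binv_b : rho binv *m rho b = 1%:M by rewrite -(rhoM rho_rep) binv_b (rho1 rho_rep).
split=> [[[fx_herm fx_nondeg] fx_sg] | [x_times [l [l_neq0 x_def]]]].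
- have xb_central := (Ad_c_compatible rho_rep _ b_binv binv_b).1
    ((form_at_sigma_compatible f_herm f_nondeg rho_c _ _).1 fx_sg).
  have rho_xb : rho (cl_mul s x b) = cl_mul s x b set0 *: 1%:M.
    by apply: (rho_central rho_rep n_even) => y; rewrite (rhoM rho_rep); apply: xb_central.
  set c := cl_mul s x b set0 in rho_xb.
  have rho_x : rho x = rho (cl_scale c binv).
    rewrite (rhoZ rho_rep) -[rho x]mulmx1 -rho_b_binv mulmxA -(rhoM rho_rep) rho_xb.
    by rewrite -scalemxAl mul1mx.
  split; first exact/(rho_inj rho_rep n_even m_gt0)/esym/(form_at_herm f_herm f_nondeg rho_c).
  exists c; split; last exact: (rho_inj rho_rep n_even m_gt0).
  apply: contraNneq (form_at_nondeg_neq0 f_herm m_gt0 fx_nondeg) => c0.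
  by rewrite rho_x c0 (rhoZ rho_rep) scale0r.
- have rho_x : rho x = l *: rho binv by rewrite x_def (rhoZ rho_rep).
  split; [split|].
  + by apply/(form_at_herm f_herm f_nondeg rho_c); rewrite -x_times.
  + apply: (form_at_nondeg f_nondeg (B := l^-1 *: rho b)).
    by rewrite rho_x -scalemxAr -scalemxAl rho_binv_b scalerA mulVf // scale1r.
  + apply/(form_at_sigma_compatible f_herm f_nondeg rho_c).
    apply/(Ad_c_compatible rho_rep _ b_binv binv_b) => y.
    by rewrite rho_x -scalemxAl rho_binv_b scalemx1 scalar_mxC.
Qed.
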